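(* Let $a,b$ be as in the context and let $w=(w_n)_{n\ge0}$ be a sequence of complex numbers. If $$\sup_{n\ge0}\Big|\frac{w_na_n}{a_{n+1}}\Big|<\infty\quad\text{and}\quad\limsup_{n\to\infty}\Big|\frac{b_n}{a_{n+1}}\Big|<1,$$ then, with $c_n:=w_{n+1}\frac{b_n}{a_{n+2}}-w_n\frac{a_n}{a_{n+1}}\frac{b_{n+1}}{a_{n+2}}$, one has $\sup_{n\ge0}|c_n|<\infty$ and $\sum_{n=3}^{\infty}\sup_{j\ge0}\big|c_j\prod_{k=3}^{n}\frac{b_{j+k-1}}{a_{j+k}}\big|<\infty$; consequently $F_w$ is a bounded operator on $\ell^p_{a,b}$ for every $1\le p<\infty$ and on $c_{0,a,b}$.
   Context: Let $a=(a_n)_{n\ge0}$, $b=(b_n)_{n\ge0}$ be sequences of nonzero complex numbers with $\limsup_{n\to\infty}(|a_n|+|b_n|)^{1/n}<\infty$, and let $R=1/\limsup_{n}(|a_n|+|b_n|)^{1/n}\in(0,\infty]$. For $n\ge0$ let $f_n(z)=(a_n+b_nz)z^n$. For $1\le p<\infty$, $\ell^p_{a,b}$ is the space of analytic functions on $\{|z|<R\}$ of the form $f=\sum_{n\ge0}\lambda_nf_n$ with $(\lambda_n)\in\ell^p(\mathbb{N}_0)$ (the series converges locally uniformly on $\{|z|<R\}$ and the $\lambda_n$ are uniquely determined by $f$), normed by $\|f\|=(\sum_n|\lambda_n|^p)^{1/p}$; thus $\{f_n\}$ is a normalized Schauder basis equivalent to the standard basis of $\ell^p(\mathbb{N}_0)$.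 The space $c_{0,a,b}$ is defined in the same way with $(\lambda_n)\in c_0(\mathbb{N}_0)$ and norm $\sup_n|\lambda_n|$. For a sequence $w=(w_n)_{n\ge0}$, the weighted forward shift is $F_w\big(\sum_{n\ge0}\mu_nz^n\big)=\sum_{n\ge0}\mu_nw_nz^{n+1}$ (acting on power series); ''bounded on $X$'' means $F_w$ maps $X$ into $X$ and is a bounded operator. *)

From HB Require Import structures.
From mathcomp Require Import all_boot all_order all_algebra.
From mathcomp Require Import all_classical all_reals all_analysis.
From mathcomp Require Import complex.
Set Implicit Arguments. Unset Strict Implicit. Unset Printing Implicit Defensive.
Import Order.TTheory GRing.Theory Num.Theory numFieldNormedType.Exports.
Local Open Scope ring_scope.
Local Open Scope classical_set_scope.

(* Elements of l^p_{a,b} / c_{0,a,b} are represented by their coefficient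
   sequence lambda (which is uniquely determined by the function).  The Taylor
   coefficients of f = sum_n lambda_n (a_n + b_n z) z^n are
   mu_m = a_m lambda_m + b_{m-1} lambda_{m-1}  (with lambda_{-1} = 0). *)
Definition ab_coef (R : realType) (a b lam : nat -> R[i]) (m : nat) : R[i] :=
  a m * lam m + (if m is k.+1 then b k * lam k else 0).

(* The weighted forward shift acting on power series coefficients:
   F_w (sum mu_n z^n) = sum mu_n w_n z^{n+1}. *)
Definition Fw (R : realType) (w mu : nat -> R[i]) (m : nat) : R[i] :=
  if m is k.+1 then mu k * w k else 0.

Definition in_lp (R : realType) (p : R) (lam : nat -> R[i]) : Prop :=
  (\sum_(0 <= n <oo) ((Normc.normc (lam n)) `^ p)%:E < +oo)%E.

Definition lp_norm (R : realType) (p : R) (lam : nat -> R[i]) : R :=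
  (fine (\sum_(0 <= n <oo) ((Normc.normc (lam n)) `^ p)%:E)%E) `^ p^-1.

Definition in_c0 (R : realType) (lam : nat -> R[i]) : Prop :=
  (fun n => Normc.normc (lam n)) @ \oo --> (0 : R).

Definition sup_norm (R : realType) (lam : nat -> R[i]) : R :=
  fine (ereal_sup (range (fun n => (Normc.normc (lam n))%:E))).

(* F_w is bounded on the sequence-space model (X, nrm) of
   {f = sum_n lambda_n f_n : lambda in X}, normed by nrm lambda:
   F_w maps each such f into the space, with norm control. *)
Definition Fw_bounded_on (R : realType) (a b w : nat -> R[i])
    (X : (nat -> R[i]) -> Prop) (nrm : (nat -> R[i]) -> R) : Prop :=
  exists C : R, 0 <= C /\
    forall lam, X lam ->
      exists nu, X nu /\ ab_coef a b nu = Fw w (ab_coef a b lam) /\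
                 nrm nu <= C * nrm lam.

Definition cseq (R : realType) (a b w : nat -> R[i]) (n : nat) : R[i] :=
  w n.+1 * (b n / a n.+2) - w n * (a n / a n.+1) * (b n.+1 / a n.+2).

(* The coefficients [nu] of [F_w f], for [f = sum_n lam_n f_n], obey
   [a_(m+1) nu_(m+1) = w_m mu_m - b_m nu_m], hence
   [|nu_(m+1)| <= g_m + |b_m / a_(m+1)| |nu_m|] with
   [g_m <= A (1 + M) max (|lam_m|, |lam_(m-1)|)], where [A] and [M] bound
   [|w_n a_n / a_(n+1)|] and [|b_n / a_(n+1)|].  As [|b_m / a_(m+1)| <= q < 1]
   from some index [N] on, dividing [|nu_m|] by the bounded weight
   [(M / q) ^ min(m, N)] turns this into a uniform contraction
   [u_(m+1) <= g_m + q u_m], which is bounded on l^p (convexity of [x ^ p])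
   and on c_0.  The same weights bound [prod_(k=3..n) |b_(j+k-1) / a_(j+k)|]
   by a constant times [q ^ (n-2)], so the series of the statement is
   dominated by a geometric series. *)

From mathcomp Require Import all_boot all_order all_algebra.
From mathcomp Require Import all_classical all_reals all_analysis.
From mathcomp Require Import complex.
From mathcomp Require Import ring zify.
Import Order.TTheory GRing.Theory Num.Theory numFieldNormedType.Exports.
Local Open Scope ring_scope.
Local Open Scope classical_set_scope.

Lemma powR_conv {R : realType} (p t x y : R) : 1 <= p -> 0 <= t <= 1 ->
  0 <= x -> 0 <= y -> (t * x + (1 - t) * y) `^ p <= t * x `^ p + (1 - t) * y `^ p.
Proof.
move=> p1 /andP[t0 t1] x0 y0.
have := convex_powR p1 (Itv01 t0 t1) (x := x) (y := y).
by rewrite !inE /= !in_itv /= x0 y0 !convRE => /(_ erefl erefl).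
Qed.

Lemma powR_max_le {R : realType} (p x y : R) : 0 <= p -> 0 <= x -> 0 <= y ->
  (Num.max x y) `^ p <= x `^ p + y `^ p.
Proof.
move=> p0 x0 y0; case: (leP x y) => _.
- by rewrite lerDr powR_ge0.
- by rewrite lerDl powR_ge0.
Qed.

Lemma eventually_le_bounded {R : realDomainType} (r : nat -> R) (q : R) N :
  (forall m, (N <= m)%N -> r m <= q) -> exists2 M, q <= M & forall m, r m <= M.
Proof.
move=> r_ev; exists (\big[Num.max/q]_(i < N) r i) => [|m]; first exact: bigmax_ge_id.
case: (ltnP m N) => mN; first exact: (le_bigmax _ _ (Ordinal mN)).
exact: le_trans (r_ev m mN) (bigmax_ge_id _ _ _ _).
Qed.

Section Contraction.
Context {R : realType} {q : R} {u y : nat -> R}.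
Hypotheses (q_ge0 : 0 <= q) (q_lt1 : q < 1).
Hypotheses (u_ge0 : forall m, 0 <= u m) (y_ge0 : forall m, 0 <= y m).
Hypothesis u_step : forall m, u m.+1 <= y m + q * u m.

Let s_gt0 : 0 < 1 - q. Proof. by rewrite subr_gt0. Qed.

Lemma contraction_sum_powR p : 1 <= p -> u 0%N = 0 ->
  forall n, \sum_(m < n) u m `^ p <= \sum_(m < n) (y m / (1 - q)) `^ p.
Proof.
move=> p1 u0; have p0 : 0 < p by apply: lt_le_trans p1.
set s := 1 - q; have qE : q = 1 - s by rewrite /s opprB addrC subrK.
have s0 : 0 <= s := ltW s_gt0.
(* Convexity of [x `^ p], applied to [u_(m+1) <= s * (y_m / s) + q * u_m]. *)
have step m : u m.+1 `^ p <= s * (y m / s) `^ p + q * u m `^ p.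
  apply: le_trans (_ : (s * (y m / s) + (1 - s) * u m) `^ p <= _).
    apply: (ge0_ler_powR (ltW p0)); rewrite ?nnegrE ?u_ge0 //.
      by rewrite -qE; apply: addr_ge0; apply: mulr_ge0; rewrite ?divr_ge0 ?y_ge0 ?u_ge0.
    by rewrite mulrCA divff ?gt_eqF // mulr1 -qE.
  by rewrite qE; apply: powR_conv; rewrite ?divr_ge0 // s0 /s gerBl.
case=> [|n]; first by rewrite !big_ord0.
set T := \sum_(m < n.+1) _; set Y := \sum_(m < n.+1) _.
have : T <= s * Y + q * T.
  rewrite {1}/T big_ord_recl /= u0 powR0 ?gt_eqF // add0r.
  apply: le_trans (_ : \sum_(i < n) (s * (y i / s) `^ p + q * u i `^ p) <= _).
    by apply: ler_sum => i _; exact: step.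
  rewrite big_split /= -!mulr_sumr; apply: lerD.
    by rewrite ler_pM2l // /Y big_ord_recr lerDl powR_ge0.
  by rewrite ler_wpM2l // /T big_ord_recr lerDl powR_ge0.
by rewrite -lerBlDr -{1}(mul1r T) -mulrBl -/s ler_pM2l.
Qed.

Lemma contraction_le Y : (forall m, y m <= Y) ->
  forall m, u m <= q ^+ m * u 0 + Y / (1 - q).
Proof.
move=> yY; have Y0 : 0 <= Y := le_trans (y_ge0 0) (yY 0).
elim=> [|m ih]; first by rewrite expr0 mul1r lerDl divr_ge0 // ltW.
apply: le_trans (u_step m) _.
have -> : q ^+ m.+1 * u 0 + Y / (1 - q) = Y + q * (q ^+ m * u 0 + Y / (1 - q)).
  by rewrite exprS; field; rewrite gt_eqF.
by apply: lerD => //; apply: ler_wpM2l.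
Qed.

End Contraction.

Lemma contraction_cvg0 {R : realType} {q : R} {u y : nat -> R} :
  0 <= q -> q < 1 -> (forall m, 0 <= u m) -> (forall m, 0 <= y m) ->
  (forall m, u m.+1 <= y m + q * u m) ->
  y @ \oo --> 0 -> u @ \oo --> 0.
Proof.
move=> q0 q1 u0 y0 u_step y_cvg; apply/cvgrPdist_le => e e_gt0.
have s_gt0 : 0 < 1 - q by rewrite subr_gt0.
have e2 : 0 < e / 2 by rewrite divr_gt0.
have [N1 _ yN1] : \forall m \near \oo, y m <= (1 - q) * (e / 2).
  move/cvgrPdist_le : y_cvg => /(_ _ (mulr_gt0 s_gt0 e2)).
  by apply: filterS => m; rewrite sub0r normrN ger0_norm.
have [k0 _ qk0] : \forall k \near \oo, q ^+ k * u N1 <= e / 2.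
  have /cvgrPdist_le/(_ _ e2) : geometric (u N1) q @ \oo --> 0.
    by apply: cvg_geometric; rewrite ger0_norm.
  apply: filterS => k /=; rewrite sub0r normrN mulrC; apply: le_trans; exact: ler_norm.
exists (N1 + k0)%N => // n le_n; rewrite sub0r normrN ger0_norm //.
have {}le_n : (N1 + k0 <= n)%N by [].
have -> : n = (N1 + (n - N1))%N by lia.
have step k : u (N1 + k.+1)%N <= y (N1 + k)%N + q * u (N1 + k)%N.
  by rewrite addnS.
have := contraction_le (u := fun k => u (N1 + k)%N) q0 q1 (fun k => y0 _)
  step _ (fun k => yN1 _ (leq_addr k N1)) (n - N1).
rewrite addn0 mulrAC divff ?gt_eqF // mul1r => /le_trans; apply.
rewrite [leRHS]splitr lerD2r; apply: qk0; rewrite /=; lia.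
Qed.

Section Weight.
Context {R : realType} {q M : R} {N : nat}.
Hypotheses (q_gt0 : 0 < q) (qM : q <= M).
Local Notation K := ((M / q) ^+ N).

Let Mq_ge1 : 1 <= M / q. Proof. by rewrite ler_pdivlMr // mul1r. Qed.

Definition weight m := (M / q) ^+ minn m N.

Lemma weight_ge1 m : 1 <= weight m. Proof. exact: exprn_ege1. Qed.

Lemma weight_gt0 m : 0 < weight m. Proof. exact: lt_le_trans ltr01 (weight_ge1 m). Qed.

Lemma weight_le m : weight m <= K.
Proof. by apply: ler_weXn2l => //; rewrite geq_minr. Qed.

Context {r : nat -> R}.
Hypotheses (r_ge0 : forall m, 0 <= r m) (r_le : forall m, r m <= M).
Hypothesis r_ev : forall m, (N <= m)%N -> r m <= q.

(* Up to the index N the weight absorbs the excess M / q of r over q. *)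
Lemma weight_step m : r m * weight m <= q * weight m.+1.
Proof.
rewrite /weight; case: (ltnP m N) => mN.
  rewrite (minn_idPl mN) exprS mulrA ler_wpM2r ?exprn_ge0 ?(le_trans ler01 Mq_ge1) //.
  by rewrite mulrCA divff ?gt_eqF // mulr1.
by rewrite (minn_idPr (leqW mN)) ler_wpM2r ?r_ev // exprn_ge0 // (le_trans ler01 Mq_ge1).
Qed.

Lemma prod_le_weight j d : \prod_(i < d) r (j + i)%N <= K * q ^+ d.
Proof.
suff P_le : \prod_(i < d) r (j + i)%N * weight j <= q ^+ d * weight (j + d).
  apply: le_trans (_ : \prod_(i < d) r (j + i)%N * weight j <= _).
    by rewrite ler_peMr ?weight_ge1 // prodr_ge0.
  by apply: le_trans P_le _; rewrite [leRHS]mulrC ler_wpM2l ?weight_le ?exprn_ge0 ?(ltW q_gt0).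
elim: d => [|d ih]; first by rewrite big_ord0 addn0 !mul1r.
rewrite big_ord_recr /= mulrAC.
apply: le_trans (_ : q ^+ d * weight (j + d) * r (j + d)%N <= _).
  by rewrite ler_wpM2r.
by rewrite exprSr addnS -!mulrA ler_wpM2l ?exprn_ge0 ?(ltW q_gt0) // mulrC weight_step.
Qed.

Section Recursion.
Hypothesis q_lt1 : q < 1.
Context {v g : nat -> R}.
Hypotheses (v_ge0 : forall m, 0 <= v m) (g_ge0 : forall m, 0 <= g m).
Hypothesis v_step : forall m, v m.+1 <= g m + r m * v m.

(* Dividing by the weight turns the recursion into a uniform contraction. *)
Let u m := v m / weight m.

Let u_ge0 m : 0 <= u m. Proof. exact: divr_ge0 (v_ge0 m) (ltW (weight_gt0 m)). Qed.

Let vE m : v m = weight m * u m.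
Proof. by rewrite /u mulrC divfK ?gt_eqF ?weight_gt0. Qed.

Let v_le m : v m <= K * u m.
Proof. by rewrite vE ler_wpM2r ?weight_le. Qed.

Let u_step m : u m.+1 <= g m + q * u m.
Proof.
have W0 := weight_gt0 m.+1.
rewrite /u ler_pdivrMr // mulrDl.
apply: le_trans (v_step m) _; apply: lerD.
  by rewrite ler_peMr ?weight_ge1.
by rewrite [in leLHS]vE mulrA -/(u m) [in leRHS]mulrAC ler_wpM2r ?u_ge0 ?weight_step.
Qed.

Lemma recursion_sum_powR p : 1 <= p -> v 0%N = 0 ->
  forall n, \sum_(m < n) v m `^ p <= \sum_(m < n) (K / (1 - q) * g m) `^ p.
Proof.
move=> p1 v0 n; have p0 : 0 <= p by apply: le_trans p1.
have K0 : 0 <= K by rewrite exprn_ge0 // (le_trans ler01).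
have s0 : 0 <= 1 - q by rewrite subr_ge0 ltW.
apply: le_trans (_ : \sum_(m < n) (K * u m) `^ p <= _).
  apply: ler_sum => m _; apply: (ge0_ler_powR p0); rewrite ?nnegrE ?v_ge0 //.
    by rewrite mulr_ge0 ?u_ge0.
have u0 : u 0%N = 0 by rewrite /u v0 mul0r.
have powRMK (f : nat -> R) : (forall m, 0 <= f m) ->
    \sum_(m < n) (K * f m) `^ p = K `^ p * \sum_(m < n) f m `^ p.
  by move=> f0; rewrite mulr_sumr; apply: eq_bigr => m _; rewrite powRM.
rewrite powRMK ?u_ge0 //.
have -> : \sum_(m < n) (K / (1 - q) * g m) `^ p =
    K `^ p * \sum_(m < n) (g m / (1 - q)) `^ p.
  rewrite -(powRMK (fun m => g m / (1 - q))) => [|m]; last by rewrite divr_ge0.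
  by apply: eq_bigr => m _; rewrite mulrA mulrAC.
rewrite ler_wpM2l ?powR_ge0 //.
exact: contraction_sum_powR (ltW q_gt0) q_lt1 u_ge0 g_ge0 u_step p p1 u0 n.
Qed.

Lemma recursion_le G : v 0%N = 0 -> (forall m, g m <= G) ->
  forall m, v m <= K / (1 - q) * G.
Proof.
move=> v0 gG m; apply: le_trans (v_le m) _.
rewrite -mulrA ler_wpM2l ?exprn_ge0 ?(le_trans ler01) //.
have := contraction_le (ltW q_gt0) q_lt1 g_ge0 u_step G gG m.
by rewrite [u 0%N]/u v0 mul0r mulr0 add0r mulrC.
Qed.

Lemma recursion_cvg0 : g @ \oo --> 0 -> v @ \oo --> 0.
Proof.
move=> g_cvg; have u_cvg := contraction_cvg0 (ltW q_gt0) q_lt1 u_ge0 g_ge0 u_step g_cvg.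
apply: (@squeeze_cvgr _ _ _ _ (fun=> 0) (fun m => K * u m)).
- by apply: nearW => m; rewrite v_ge0 v_le.
- exact: cvg_cst.
- by rewrite -(mulr0 K); apply: cvgM => //; exact: cvg_cst.
Qed.

End Recursion.
End Weight.

Local Notation nc := (@Normc.normc _).

Lemma normc_ge0 {R : rcfType} (z : R[i]) : 0 <= nc z.
Proof. by case: z => x y; apply: sqrtr_ge0. Qed.

Section ExtendedReal.
Context {R : realType}.
Local Open Scope ereal_scope.

Lemma ereal_sup_range_lty (f : nat -> R) (B : R) : (forall n, (f n <= B)%R) ->
  ereal_sup (range (fun n => (f n)%:E)) < +oo.
Proof.
move=> fB; apply: le_lt_trans (ltry B).
by apply: ge_ereal_sup => _ [n _ <-]; rewrite lee_fin.
Qed.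

Lemma le_fine_ereal_sup_range (f : nat -> R) :
  ereal_sup (range (fun n => (f n)%:E)) < +oo ->
  forall n, (f n <= fine (ereal_sup (range (fun n => (f n)%:E))))%R.
Proof.
set S := ereal_sup _ => S_lty n.
have fS k : (f k)%:E <= S by apply: ereal_sup_ubound; exists k.
have S_fin : S \is a fin_num.
  by rewrite fin_numElt S_lty (lt_le_trans (ltNyr _) (fS 0%N)).
by rewrite -lee_fin fineK.
Qed.

Lemma fine_ereal_sup_range_le (f : nat -> R) (B : R) : (forall n, (f n <= B)%R) ->
  (fine (ereal_sup (range (fun n => (f n)%:E))) <= B)%R.
Proof.
set S := ereal_sup _ => fB.
have fS : (f 0%N)%:E <= S by apply: ereal_sup_ubound; exists 0%N.
have SB : S <= B%:E by apply: ge_ereal_sup => _ [n _ <-]; rewrite lee_fin.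
have S_fin : S \is a fin_num.
  by rewrite fin_numElt (lt_le_trans (ltNyr _) fS) (le_lt_trans SB (ltry _)).
by rewrite -lee_fin fineK.
Qed.

Lemma nneseries_le_of_sums (x : nat -> R) N (B : R) : (forall n, (0 <= x n)%R) ->
  (forall n, (\sum_(N <= i < n) x i <= B)%R) -> \sum_(N <= i <oo) (x i)%:E <= B%:E.
Proof.
move=> x0 xB; apply: lime_le.
  by apply: is_cvg_nneseries => n _; rewrite lee_fin.
by apply: nearW => n; rewrite sumEFin lee_fin.
Qed.

Lemma sums_le_nneseries (x : nat -> R) N n : (forall n, (0 <= x n)%R) ->
  (\sum_(N <= i < n) x i)%:E <= \sum_(N <= i <oo) (x i)%:E.
Proof.
by move=> x0; rewrite -sumEFin; apply: nneseries_lim_ge => k _ _; rewrite lee_fin.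
Qed.

Lemma limn_esup_lt_eventually (f : nat -> R) (l : R) : (forall n, (0 <= f n)%R) ->
  limn_esup (fun n => (f n)%:E) < l%:E ->
  exists q N, [/\ (0 < q)%R, (q < l)%R & forall m, (N <= m)%N -> (f m <= q)%R].
Proof.
move=> f0; rewrite limn_esup_lim.
have -> : limn (esups (fun n => (f n)%:E)) = ereal_inf (range (esups (fun n => (f n)%:E))).
  by apply/cvg_lim => //; apply: cvg_esups_inf.
move=> /ereal_inf_lt [_ [N _ <-]].
set E := esups _ N => E_lt.
have fE m : (N <= m)%N -> (f m)%:E <= E by move=> Nm; apply: ereal_sup_ubound; exists m.
have E0 : 0 <= E by apply: le_trans (fE N (leqnn _)); rewrite lee_fin.
have E_fin : E = (fine E)%:E by rewrite fineK // ge0_fin_numE // (lt_le_trans E_lt) // leey.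
have e0 : (0 <= fine E)%R by rewrite -lee_fin -E_fin.
have el : (fine E < l)%R by rewrite -lte_fin -E_fin.
exists ((fine E + l) / 2)%R, N; split.
- by rewrite divr_gt0 // ltr_wpDl // (le_lt_trans e0).
- by rewrite ltr_pdivrMr // mulr_natr mulr2n ltrD2r.
move=> m Nm; apply: (@le_trans _ _ (fine E)); first by rewrite -lee_fin -E_fin fE.
by rewrite ler_pdivlMr // mulr_natr mulr2n lerD2l ltW.
Qed.

End ExtendedReal.

Section SequenceSpaces.
Context {R : realType}.
Implicit Types (lam nu : nat -> R[i]).

Lemma lp_norm_le_of_sums (p D : R) lam nu : 0 < p -> 0 <= D -> in_lp p lam ->
  (forall n, \sum_(m < n) nc (nu m) `^ p <= D * \sum_(m < n) nc (lam m) `^ p) ->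
  in_lp p nu /\ lp_norm p nu <= D `^ p^-1 * lp_norm p lam.
Proof.
move=> p0 D0 lam_lp nu_sums.
have pow0 (f : nat -> R[i]) n : 0 <= nc (f n) `^ p by apply: powR_ge0.
move: lam_lp; rewrite /in_lp; set S := (X in (X < _)%E) => S_lty.
have S0 : (0 <= S)%E by apply: nneseries_ge0 => n _ _; rewrite lee_fin.
have SE : S = (fine S)%:E by rewrite fineK // ge0_fin_numE.
have nu_le : (\sum_(0 <= n <oo) (nc (nu n) `^ p)%:E <= (D * fine S)%:E)%E.
  apply: nneseries_le_of_sums => // n; rewrite big_mkord.
  apply: le_trans (nu_sums n) _; rewrite ler_wpM2l // -lee_fin -SE.
  by have := sums_le_nneseries _ 0 n (pow0 lam); rewrite big_mkord.
have nu_lp : in_lp p nu by apply: le_lt_trans nu_le (ltry _).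
split => //; rewrite /lp_norm -/S -powRM ?fine_ge0 //.
have T0 : (0 <= \sum_(0 <= n <oo) (nc (nu n) `^ p)%:E)%E.
  by apply: nneseries_ge0 => n _ _; rewrite lee_fin.
have pinv0 : 0 <= p^-1 by rewrite invr_ge0 ltW.
apply: (ge0_ler_powR pinv0); rewrite ?nnegrE ?fine_ge0 ?mulr_ge0 //.
  by rewrite fine_ge0.
by rewrite -lee_fin fineK ?ge0_fin_numE ?(le_lt_trans nu_le (ltry _)).
Qed.

Lemma in_c0_le_sup_norm lam : in_c0 lam -> forall n, nc (lam n) <= sup_norm lam.
Proof.
move=> lam_c0; apply: le_fine_ereal_sup_range.
have /cvg_seq_bounded[B [_ lamB]] : cvgn (fun n => nc (lam n)).
  by apply/cvg_ex; exists 0.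
apply: (ereal_sup_range_lty _ (B + 1)) => n.
have B1 : B < B + 1 by rewrite ltrDl.
by have /= := lamB _ B1 n I; rewrite ger0_norm ?normc_ge0.
Qed.

Lemma sup_norm_le lam (C : R) : (forall n, nc (lam n) <= C) -> sup_norm lam <= C.
Proof. exact: fine_ereal_sup_range_le. Qed.

End SequenceSpaces.

Definition shiftr {T : zmodType} (f : nat -> T) m : T := if m is k.+1 then f k else 0.

Lemma sum_shiftr_powR {R : realType} (p : R) (lam : nat -> R[i]) n : 0 < p ->
  \sum_(m < n) nc (shiftr lam m) `^ p <= \sum_(m < n) nc (lam m) `^ p.
Proof.
move=> p0; case: n => [|n]; first by rewrite !big_ord0.
rewrite big_ord_recl [shiftr _ _]/= Normc.normc0 powR0 ?gt_eqF // add0r.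
by rewrite big_ord_recr lerDl powR_ge0.
Qed.

Lemma shiftr_c0 {R : realType} (lam : nat -> R[i]) : in_c0 lam -> in_c0 (shiftr lam).
Proof. by move=> lam_c0; rewrite /in_c0 -cvg_shiftS. Qed.

Section ForwardShift.
Context {R : realType} {a b w : nat -> R[i]}.
Hypothesis a_neq0 : forall n, a n != 0.
Context {A q M : R} {N : nat}.
Hypotheses (A_ge0 : 0 <= A) (wa_le : forall n, nc (w n * a n / a n.+1) <= A).
Hypotheses (q_gt0 : 0 < q) (q_lt1 : q < 1) (qM : q <= M).
Hypothesis ba_le : forall n, nc (b n / a n.+1) <= M.
Hypothesis ba_ev : forall n, (N <= n)%N -> nc (b n / a n.+1) <= q.

Local Notation K := ((M / q) ^+ N).
Local Notation C := (K / (1 - q) * (A * (1 + M))).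

Let M_ge0 : 0 <= M. Proof. exact: le_trans (ltW q_gt0) qM. Qed.
Let K_ge0 : 0 <= K. Proof. by rewrite exprn_ge0 // divr_ge0 // ltW. Qed.
Let C_ge0 : 0 <= C.
Proof. by rewrite !mulr_ge0 ?addr_ge0 ?invr_ge0 ?subr_ge0 ?(ltW q_lt1). Qed.

(* Solving [a_m nu_m + b_(m-1) nu_(m-1) = w_(m-1) mu_(m-1)] for [nu_m]. *)
Fixpoint Fw_coef (lam : nat -> R[i]) m : R[i] :=
  if m is k.+1 then (ab_coef a b lam k * w k - b k * Fw_coef lam k) / a k.+1 else 0.

Lemma ab_coef_Fw_coef lam : ab_coef a b (Fw_coef lam) = Fw w (ab_coef a b lam).
Proof.
apply/funext => -[|k]; first by rewrite /ab_coef /= mulr0 addr0.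
by rewrite [in LHS]/ab_coef /=; set mu := ab_coef _ _ lam k; field.
Qed.

Section Coefficients.
Variable lam : nat -> R[i].

Let source m := nc (ab_coef a b lam m * w m / a m.+1).

Let Fw_coef_step m :
  nc (Fw_coef lam m.+1) <= source m + nc (b m / a m.+1) * nc (Fw_coef lam m).
Proof.
rewrite /= mulrBl [b m * _ / _]mulrAC -Normc.normcM.
by apply: le_trans (le_normcD _ _) _; rewrite normcN.
Qed.

Let source_le m :
  source m <= A * nc (lam m) + A * M * nc (shiftr lam m).
Proof.
rewrite /source /ab_coef; case: m => [|k]; rewrite [shiftr _ _]/= ?Normc.normc0 /=.
  rewrite addr0 mulr0 addr0 (_ : _ * _ / _ = w 0 * a 0 / a 1 * lam 0).
    by rewrite Normc.normcM ler_wpM2r ?normc_ge0.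
  by field; rewrite a_neq0.
have -> : (a k.+1 * lam k.+1 + b k * lam k) * w k.+1 / a k.+2 =
    (w k.+1 * a k.+1 / a k.+2) * lam k.+1 +
    (w k.+1 * a k.+1 / a k.+2) * (b k / a k.+1) * lam k.
  by field; rewrite !a_neq0.
set al := w k.+1 * _ / _; set r := b k / _.
apply: le_trans (le_normcD _ _) _.
rewrite (Normc.normcM al) (Normc.normcM (al * r)) (Normc.normcM al r).
apply: lerD; first by rewrite ler_wpM2r ?normc_ge0 ?wa_le.
by rewrite ler_wpM2r ?normc_ge0 // ler_pM ?normc_ge0 ?wa_le ?ba_le.
Qed.

Let h m := Num.max (nc (lam m)) (nc (shiftr lam m)).

Let h_ge0 m : 0 <= h m. Proof. by rewrite le_max normc_ge0. Qed.

Let source_le_max m : source m <= A * (1 + M) * h m.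
Proof.
apply: le_trans (source_le m) _.
rewrite mulrDr mulr1 mulrDl; apply: lerD; first by rewrite ler_wpM2l // le_max lexx.
by rewrite ler_wpM2l ?mulr_ge0 // le_max lexx orbT.
Qed.

Lemma Fw_coef_sum_powR p : 1 <= p -> forall n,
  \sum_(m < n) nc (Fw_coef lam m) `^ p <= 2 * C `^ p * \sum_(m < n) nc (lam m) `^ p.
Proof.
move=> p1 n; have p0 : 0 < p by apply: lt_le_trans p1.
have := recursion_sum_powR (v := fun m => nc (Fw_coef lam m)) (g := source)
  q_gt0 qM ba_le ba_ev q_lt1 (fun=> normc_ge0 _) (fun=> normc_ge0 _) Fw_coef_step
  p p1 (Normc.normc0 _) n => /le_trans; apply.
apply: le_trans (_ : \sum_(m < n) (C * h m) `^ p <= _).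
  apply: ler_sum => m _; apply: (ge0_ler_powR (ltW p0)).
  - by rewrite nnegrE mulr_ge0 ?normc_ge0 // divr_ge0 // subr_ge0 ltW.
  - by rewrite nnegrE mulr_ge0.
  - by rewrite -[leRHS]mulrA ler_wpM2l ?source_le_max // divr_ge0 // subr_ge0 ltW.
under eq_bigr do rewrite powRM //.
rewrite -mulr_sumr [2 * _]mulrC -[leRHS]mulrA ler_wpM2l ?powR_ge0 // mulr_natl mulr2n.
apply: le_trans (ler_sum _ (fun m _ =>
  powR_max_le _ _ _ (ltW p0) (normc_ge0 _) (normc_ge0 _))) _.
by rewrite big_split lerD2l sum_shiftr_powR.
Qed.

Lemma Fw_coef_le L : (forall n, nc (lam n) <= L) -> forall n, nc (Fw_coef lam n) <= C * L.
Proof.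
move=> lamL; have L0 : 0 <= L := le_trans (normc_ge0 _) (lamL 0%N).
have hL m : h m <= L.
  by rewrite ge_max lamL; case: m => [|m]; rewrite [shiftr _ _]/= ?Normc.normc0 ?lamL.
have sourceL m : source m <= A * (1 + M) * L.
  by apply: le_trans (source_le_max m) _; rewrite ler_wpM2l ?mulr_ge0 ?addr_ge0 ?hL.
move=> n; rewrite -mulrA.
exact: (recursion_le (v := fun m => nc (Fw_coef lam m)) q_gt0 qM ba_le ba_ev q_lt1
  (fun=> normc_ge0 _) (fun=> normc_ge0 _) Fw_coef_step _ (Normc.normc0 _) sourceL n).
Qed.

Lemma Fw_coef_c0 : in_c0 lam -> in_c0 (Fw_coef lam).
Proof.
move=> lam_c0.
apply: (recursion_cvg0 (v := fun m => nc (Fw_coef lam m)) (g := source)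
  q_gt0 qM ba_le ba_ev q_lt1 (fun=> normc_ge0 _) (fun=> normc_ge0 _) Fw_coef_step).
apply: (@squeeze_cvgr _ _ _ _ (fun=> 0)
  (fun m => A * (1 + M) * (nc (lam m) + nc (shiftr lam m)))).
- apply: nearW => m; rewrite normc_ge0 /=.
  apply: le_trans (source_le_max m) _; rewrite ler_wpM2l ?mulr_ge0 ?addr_ge0 //.
  by rewrite ge_max lerDl lerDr !normc_ge0.
- exact: cvg_cst.
have := cvgM (cvg_cst (A * (1 + M))) (cvgD lam_c0 (shiftr_c0 _ lam_c0)).
by rewrite addr0 mulr0; apply.
Qed.

End Coefficients.

Lemma Fw_bounded_lp p : 1 <= p -> Fw_bounded_on a b w (in_lp p) (lp_norm p).
Proof.
move=> p1; have p0 : 0 < p by apply: lt_le_trans p1.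
have D0 : 0 <= 2 * C `^ p by rewrite mulr_ge0 ?powR_ge0.
exists ((2 * C `^ p) `^ p^-1); split; first exact: powR_ge0.
move=> lam lam_lp; exists (Fw_coef lam).
have [nu_lp nu_le] := lp_norm_le_of_sums _ _ _ _ p0 D0 lam_lp (Fw_coef_sum_powR lam p p1).
by split; last split; rewrite ?ab_coef_Fw_coef.
Qed.

Lemma Fw_bounded_c0 : Fw_bounded_on a b w (@in_c0 R) (@sup_norm R).
Proof.
exists C; split => // lam lam_c0; exists (Fw_coef lam); split; last split.
- exact: Fw_coef_c0.
- exact: ab_coef_Fw_coef.
- exact/sup_norm_le/Fw_coef_le/in_c0_le_sup_norm.
Qed.

Lemma cseq_le n : nc (cseq a b w n) <= A * M + A * M.
Proof.
have -> : cseq a b w n = (w n.+1 * a n.+1 / a n.+2) * (b n / a n.+1)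
    - (w n * a n / a n.+1) * (b n.+1 / a n.+2).
  by rewrite /cseq; field; rewrite !a_neq0.
apply: le_trans (le_normcD _ _) _; rewrite normcN.
by apply: lerD; rewrite Normc.normcM ler_pM ?normc_ge0 ?wa_le ?ba_le.
Qed.

Lemma prod_ba_le j n :
  nc (\prod_(3 <= k < n.+1) (b (j + k - 1)%N / a (j + k)%N)) <= K * q ^+ (n - 2).
Proof.
rewrite (big_morph _ (@Normc.normcM R) (Normc.normc1 R)) (big_addn 0 _ 3) big_mkord.
rewrite (_ : (n.+1 - 3 = n - 2)%N); last by lia.
rewrite (eq_bigr (fun i : 'I_(n - 2) => nc (b (j.+2 + i)%N / a (j.+2 + i).+1))) => [|i _].
  exact: (prod_le_weight q_gt0 qM (fun=> normc_ge0 _) ba_le ba_ev).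
have -> : (j + (i + 3) - 1 = j.+2 + i)%N by lia.
by have -> : (j + (i + 3) = (j.+2 + i).+1)%N by lia.
Qed.

Lemma cseq_sup_lty : (ereal_sup (range (fun n => (nc (cseq a b w n))%:E)) < +oo)%E.
Proof. exact: ereal_sup_range_lty cseq_le. Qed.

Lemma cseq_prod_sum_lty :
  (\sum_(3 <= n <oo) ereal_sup (range (fun j => (nc (cseq a b w j *
      \prod_(3 <= k < n.+1) (b (j + k - 1)%N / a (j + k)%N)))%:E)) < +oo)%E.
Proof.
set D := (A * M + A * M) * K.
have D0 : 0 <= D by rewrite mulr_ge0 ?addr_ge0 ?mulr_ge0.
apply: (@le_lt_trans _ _ (\sum_(3 <= n <oo) (D * q ^+ (n - 2))%:E)%E).
  apply: lee_nneseries => [n _ _|n _].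
    apply: le_trans (ereal_sup_ubound _); last by exists 0%N.
    by rewrite lee_fin normc_ge0.
  apply: ge_ereal_sup => _ [j _ <-]; rewrite lee_fin Normc.normcM -mulrA.
  by rewrite ler_pM ?normc_ge0 ?cseq_le ?prod_ba_le.
apply: le_lt_trans (ltry (D * q / (1 - q))).
apply: nneseries_le_of_sums => [n|k]; first by rewrite mulr_ge0 ?exprn_ge0 ?(ltW q_gt0).
rewrite (big_addn 0 _ 3).
rewrite (eq_bigr (geometric (D * q) q)) => [|i _]; last first.
  by rewrite /= (_ : (i + 3 - 2 = i.+1)%N) ?exprS ?mulrA //; lia.
apply: geometric_le_lim => //; first exact: mulr_ge0 D0 (ltW q_gt0).
by rewrite ger0_norm ?ltW.
Qed.

End ForwardShift.

Theorem mainTheorem3 (R : realType) (a b w : nat -> R[i])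
  (ha : forall n, a n != 0) (hb : forall n, b n != 0)
  (hR : (limn_esup (fun n => ((Normc.normc (a n) + Normc.normc (b n)) `^ (n%:R)^-1)%:E)
          < +oo)%E)
  (hw : (ereal_sup (range (fun n => (Normc.normc (w n * a n / a n.+1))%:E)) < +oo)%E)
  (hba : (limn_esup (fun n => (Normc.normc (b n / a n.+1))%:E) < 1%:E)%E) :
  (ereal_sup (range (fun n => (Normc.normc (cseq a b w n))%:E)) < +oo)%E /\
  (\sum_(3 <= n <oo)
      ereal_sup (range (fun j => (Normc.normc (cseq a b w j *
          \prod_(3 <= k < n.+1) (b (j + k - 1)%N / a (j + k)%N)))%:E))
     < +oo)%E /\
  (forall p : R, 1 <= p ->
     Fw_bounded_on a b w (in_lp p) (lp_norm p)) /\
  Fw_bounded_on a b w (@in_c0 R) (@sup_norm R).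
Proof.
(* [hb] and [hR] only serve to make the spaces well defined. *)
have wa_le := le_fine_ereal_sup_range _ hw.
have A_ge0 := le_trans (normc_ge0 _) (wa_le 0%N).
have [q [N [q_gt0 q_lt1 ba_ev]]] := limn_esup_lt_eventually _ _ (fun=> normc_ge0 _) hba.
have [M qM ba_le] := eventually_le_bounded _ _ _ ba_ev.
split; first exact: (cseq_sup_lty ha wa_le ba_le).
split; first exact: (cseq_prod_sum_lty ha A_ge0 wa_le q_gt0 q_lt1 qM ba_le ba_ev).
split; first exact: (Fw_bounded_lp ha A_ge0 wa_le q_gt0 q_lt1 qM ba_le ba_ev).
exact: (Fw_bounded_c0 ha A_ge0 wa_le q_gt0 q_lt1 qM ba_le ba_ev).
Qed.
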